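(* The sets $A^{\mathbb N}_{fs}$ and $\mathbb N^A_{fs}$ are FSM Tarski I infinite (and hence FSM Tarski III infinite).
   Context: Framework (FSM). Work in ZF with a fixed infinite set $A$ of atoms; $S_A$ is the group of bijections of $A$ fixing all but finitely many atoms, acting on $A$ by evaluation and trivially on $\mathbb N$ and $\{0,1\}$; $Fix(S)$ is the set of $\pi\in S_A$ fixing each element of $S\subseteq A$. For $S_A$-sets $X,Y$, $Y^X_{fs}$ is the set of functions $f:X\to Y$ for which there is a finite $S\subseteq A$ with $f(\pi\cdot x)=\pi\cdot f(x)$ for all $\pi\in Fix(S)$, $x\in X$; it carries the action $(\pi\cdot f)(x)=\pi\cdot f(\pi^{-1}\cdot x)$. Products carry the componentwise action. A set $X$ is FSM Tarski I infinite if there is a finitely supported bijection $X\to X\times X$, and FSM Tarski III infinite if there is a finitely supported bijection between $X$ and $\{0,1\}\times X$. *)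

From Stdlib Require Import List.
Import ListNotations.
Set Implicit Arguments.

(* Elements of S_A: bijections of A (given with their inverse) fixing all
   atoms outside a finite list. *)
Record perm (A : Type) := Perm {
  pfun : A -> A;
  pinv : A -> A;
  pfunK : forall a, pinv (pfun a) = a;
  pinvK : forall a, pfun (pinv a) = a;
  psupp : list A;
  psuppP : forall a, ~ In a psupp -> pfun a = a }.

Lemma perm_inv_supp (A : Type) (p : perm A) :
  forall a, ~ In a (psupp p) -> pinv p a = a.
Proof. intros a H; pose proof (pfunK p a) as E; rewrite (psuppP p a H) in E; exact E. Qed.

Definition perm_inv (A : Type) (p : perm A) : perm A :=
  @Perm A (pinv p) (pfun p) (pinvK p) (pfunK p) (psupp p) (perm_inv_supp p).

Definition fixes (A : Type) (S : list A) (p : perm A) : Prop :=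
  forall a, In a S -> pfun p a = a.

Record SAset (A : Type) := { carrier :> Type; act : perm A -> carrier -> carrier }.

Definition atoms_set (A : Type) : SAset A := {| carrier := A; act := fun p a => pfun p a |}.
Definition nat_set (A : Type) : SAset A := {| carrier := nat; act := fun _ n => n |}.
Definition two_set (A : Type) : SAset A := {| carrier := bool; act := fun _ b => b |}.
Definition prod_set (A : Type) (X Y : SAset A) : SAset A :=
  {| carrier := (carrier X * carrier Y)%type;
     act := fun p xy => (act X p (fst xy), act Y p (snd xy)) |}.
Definition fun_set (A : Type) (X Y : SAset A) : SAset A :=
  {| carrier := (carrier X -> carrier Y);
     act := fun p f x => act Y p (f (act X (perm_inv p) x)) |}.

Definition fs_map (A : Type) (X Y : SAset A) (P : carrier X -> Prop)
    (f : carrier X -> carrier Y) : Prop :=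
  exists S : list A, forall p, fixes S p -> forall x, P x ->
    f (act X p x) = act Y p (f (x)).

Definition fs_funs (A : Type) (X Y : SAset A) : carrier (fun_set X Y) -> Prop :=
  fun f => fs_map X Y (fun _ => True) f.

Definition prodP (A : Type) (X Y : SAset A) (P : carrier X -> Prop) (Q : carrier Y -> Prop)
  : carrier (prod_set X Y) -> Prop := fun xy => P (fst xy) /\ Q (snd xy).

Definition fs_bij (A : Type) (X Y : SAset A) (P : carrier X -> Prop) (Q : carrier Y -> Prop)
    (f : carrier X -> carrier Y) : Prop :=
  (forall x, P x -> Q (f x)) /\
  (forall x y, P x -> P y -> f x = f y -> x = y) /\
  (forall y, Q y -> exists x, P x /\ f x = y) /\
  fs_map X Y P f.

Definition FSM_TarskiI_infinite (A : Type) (X : SAset A) (P : carrier X -> Prop) : Prop :=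
  exists f : carrier X -> carrier (prod_set X X), fs_bij X (prod_set X X) P (prodP P P) f.

Definition FSM_TarskiIII_infinite (A : Type) (X : SAset A) (P : carrier X -> Prop) : Prop :=
  exists f : carrier X -> carrier (prod_set (two_set A) X),
    fs_bij X (prod_set (two_set A) X) P (prodP (fun _ => True) P) f.

From Stdlib Require Import List.
From Stdlib Require Import Classical ClassicalEpsilon FunctionalExtensionality
  PropExtensionality Arith Lia Cantor.
Import ListNotations.

(* - A^N_fs (an fs sequence has all its values supported by one finite S):
     Tarski I splits a sequence into its even- and odd-indexed subsequences;
     Tarski III is a Hilbert-hotel argument with two distinct atoms s, t,
     peeling the head of the sequences of the form t.y or s.y with y in
     s^* t A^N, and leaving all other sequences untouched.
   - N^A_fs (an fs function is invariant under Fix(S) for a finite S):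
     Tarski I composes pointwise with Cantor's pairing N ~ N x N; Tarski III
     extracts the parity of the value at a fixed atom s and halves it.

   Both sides use the bijection {0,1} x N ~ N, (b, k) |-> b + 2k.  The
   hypothesis that A is infinite is only used to get two distinct atoms. *)

Definition dec (P : Prop) : {P} + {~ P} := excluded_middle_informative P.

Lemma fs_bij_of_inverse (A : Type) (X Y : SAset A) (P : X -> Prop) (Q : Y -> Prop)
    (f : X -> Y) (g : Y -> X) :
  (forall x, P x -> Q (f x)) -> (forall y, Q y -> P (g y)) ->
  (forall x, P x -> g (f x) = x) -> (forall y, Q y -> f (g y) = y) ->
  fs_map X Y P f -> fs_bij X Y P Q f.
Proof.
  intros PQ QP gf fg fs_f; repeat split; auto.
  - intros x y Px Py E; rewrite <- (gf x Px), <- (gf y Py), E; reflexivity.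
  - intros y Qy; exists (g y); auto.
Qed.

Lemma two_distinct_of_not_finite (A : Type) :
  ~ (exists l : list A, forall a, In a l) -> exists s t : A, s <> t.
Proof.
  intro inf; apply NNPP; intro no_pair; apply inf.
  destruct (classic (exists s : A, True)) as [[s _] | empty].
  - exists [s]; intro a; left; apply NNPP; intro ne.
    apply no_pair; exists s, a; exact ne.
  - exists []; intro a; apply empty; exists a; exact I.
Qed.

Definition nat_join (b : bool) (k : nat) : nat := Nat.b2n b + 2 * k.

Lemma nat_join_odd b k : Nat.odd (nat_join b k) = b.
Proof. unfold nat_join; rewrite Nat.odd_add_mul_2; destruct b; reflexivity. Qed.

Lemma nat_join_div2 b k : Nat.div2 (nat_join b k) = k.
Proof.
  destruct b; unfold nat_join; simpl Nat.b2n.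
  - apply Nat.div2_succ_double.
  - apply Nat.div2_double.
Qed.

Lemma nat_join_odd_div2 n : nat_join (Nat.odd n) (Nat.div2 n) = n.
Proof. unfold nat_join; rewrite (Nat.div2_odd n) at 3; lia. Qed.

Section Atoms.
Context {A : Type}.

(* A permutation is injective, so a fixed point has no other preimage. *)
Lemma pfun_eq_fixed (p : perm A) c a : pfun p c = c -> (pfun p a = c <-> a = c).
Proof.
  intro pc; split; intro E; [| subst; exact pc].
  rewrite <- (pfunK p a), <- (pfunK p c), E, pc; reflexivity.
Qed.

Lemma pinv_fixed (p : perm A) c : pfun p c = c -> pinv p c = c.
Proof. intro pc; rewrite <- pc at 1; apply pfunK. Qed.

Lemma pinv_eq_fixed (p : perm A) c a : pfun p c = c -> (pinv p a = c <-> a = c).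
Proof. intro pc; exact (pfun_eq_fixed (perm_inv p) c a (pinv_fixed p c pc)). Qed.

Lemma fixes_incl (S T : list A) p : incl S T -> fixes T p -> fixes S p.
Proof. intros ST fixT a aS; apply fixT, ST, aS. Qed.

Definition supports (S : list A) (a : A) : Prop :=
  forall p : perm A, fixes S p -> pfun p a = a.

Lemma supports_incl S T a : incl S T -> supports S a -> supports T a.
Proof. intros ST Sa p fixT; apply Sa, (fixes_incl _ _ _ ST fixT). Qed.

Lemma supports_In S a : In a S -> supports S a.
Proof. intros aS p fixS; apply fixS, aS. Qed.

End Atoms.

Section Sequences.
Variable A : Type.

Notation seqs := (fun_set (nat_set A) (atoms_set A)).
Notation fs_seq := (@fs_funs A (nat_set A) (atoms_set A)).

Lemma fs_seq_iff (x : nat -> A) : fs_seq x <-> exists S, forall n, supports S (x n).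
Proof.
  split; intros [S HS]; exists S.
  - intros n p fixS; symmetry; exact (HS p fixS n I).
  - intros p fixS n _; symmetry; exact (HS n p fixS).
Qed.

(* Reindexing only drops or repeats values, so it keeps a sequence fs. *)
Lemma fs_seq_reindex (r : nat -> nat) (x : nat -> A) :
  fs_seq x -> fs_seq (fun n => x (r n)).
Proof. rewrite !fs_seq_iff; intros [S HS]; exists S; intro n; apply HS. Qed.

Definition cns (a : A) (x : nat -> A) : nat -> A :=
  fun n => match n with 0 => a | S m => x m end.

Definition tail (x : nat -> A) : nat -> A := fun n => x (S n).

Lemma tail_cns a (y : nat -> A) : tail (cns a y) = y.
Proof. reflexivity. Qed.

Lemma cns_head_tail (x : nat -> A) : cns (x 0) (tail x) = x.
Proof. apply functional_extensionality; intros [|n]; reflexivity. Qed.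

Lemma fs_seq_cns a x : fs_seq x -> fs_seq (cns a x).
Proof.
  rewrite !fs_seq_iff; intros [S HS]; exists (a :: S); intros [|n]; simpl.
  - apply supports_In; left; reflexivity.
  - apply (supports_incl _ _ _ (incl_tl a (incl_refl S))), HS.
Qed.

Definition split_seq (x : nat -> A) : (nat -> A) * (nat -> A) :=
  (fun k => x (nat_join false k), fun k => x (nat_join true k)).

Definition merge_seq (gh : (nat -> A) * (nat -> A)) : nat -> A :=
  fun n => (if Nat.odd n then snd gh else fst gh) (Nat.div2 n).

Lemma fs_seq_merge g h : fs_seq g -> fs_seq h -> fs_seq (merge_seq (g, h)).
Proof.
  rewrite !fs_seq_iff; intros [S HS] [T HT]; exists (S ++ T); intro n.
  unfold merge_seq; simpl; destruct (Nat.odd n).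
  - apply (supports_incl _ _ _ (incl_appr S (incl_refl T))), HT.
  - apply (supports_incl _ _ _ (incl_appl T (incl_refl S))), HS.
Qed.

Lemma seqs_TarskiI : FSM_TarskiI_infinite seqs fs_seq.
Proof.
  exists split_seq; apply fs_bij_of_inverse with (g := merge_seq).
  - intros x fx; split; apply (fs_seq_reindex (nat_join _)), fx.
  - intros [g h] [fg fh]; apply fs_seq_merge; assumption.
  - intros x _; apply functional_extensionality; intro n; unfold merge_seq; simpl.
    rewrite <- (nat_join_odd_div2 n) at 3; destruct (Nat.odd n); reflexivity.
  - intros [g h] _; unfold split_seq, merge_seq; cbn [fst snd].
    f_equal; apply functional_extensionality; intro k;
      rewrite nat_join_odd, nat_join_div2; reflexivity.
  - exists []; intros p _ x _; reflexivity.
Qed.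

Section Hotel.
Variables (s t : A).
Hypothesis s_neq_t : s <> t.

(* x lies in s^* t A^N: it reaches t after a (possibly empty) block of s's. *)
Definition hits_t (x : nat -> A) : Prop :=
  exists n, x n = t /\ forall i, i < n -> x i = s.

Lemma hits_t_cns a y : hits_t (cns a y) <-> a = t \/ (a = s /\ hits_t y).
Proof.
  split.
  - intros [[|n] [xn below]]; [left; exact xn |].
    destruct (dec (a = t)) as [at_ | a_nt]; [left; exact at_ | right]; split.
    + apply (below 0); lia.
    + exists n; split; [exact xn |]; intros i i_n; apply (below (S i)); lia.
  - intros [at_ | [as_ [n [yn below]]]].
    + exists 0; split; [exact at_ | intros i i0; lia].
    + exists (S n); split; [exact yn |]; intros [|i] i_n; [exact as_ |].
      apply below; lia.
Qed.

Lemma hits_t_perm (p : perm A) x : pfun p s = s -> pfun p t = t ->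
  hits_t (fun n => pfun p (x n)) <-> hits_t x.
Proof.
  intros ps pt; unfold hits_t; split; intros [n [xn below]]; exists n; split.
  - apply (pfun_eq_fixed p t (x n) pt), xn.
  - intros i i_n; apply (pfun_eq_fixed p s (x i) ps), below, i_n.
  - rewrite xn; exact pt.
  - intros i i_n; rewrite below; auto.
Qed.

Definition hotel_out (x : nat -> A) : bool * (nat -> A) :=
  if dec (x 0 = t) then (true, tail x)
  else if dec (x 0 = s /\ hits_t (tail x)) then (false, tail x)
  else (false, x).

Definition hotel_in (bx : bool * (nat -> A)) : nat -> A :=
  let (b, y) := bx in
  if b then cns t y else if dec (hits_t y) then cns s y else y.

(* The two hotel maps are mutually inverse; the third case of [hotel_out]
   relies on [hits_t_cns] to exclude the sequences of the first two. *)
Lemma hotel_in_out x : hotel_in (hotel_out x) = x.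
Proof.
  unfold hotel_out.
  destruct (dec (x 0 = t)) as [x0t | x0_not_t];
    [| destruct (dec (x 0 = s /\ hits_t (tail x))) as [[x0s ht] | not_s_hits]];
    simpl.
  - rewrite <- x0t; apply cns_head_tail.
  - destruct (dec (hits_t (tail x))) as [_ | nht]; [| contradiction].
    rewrite <- x0s; apply cns_head_tail.
  - destruct (dec (hits_t x)) as [hx | _]; [exfalso | reflexivity].
    rewrite <- cns_head_tail, hits_t_cns in hx; tauto.
Qed.

Lemma hotel_out_in b y : hotel_out (hotel_in (b, y)) = (b, y).
Proof.
  unfold hotel_in; destruct b; [| destruct (dec (hits_t y)) as [hy | nhy]];
    unfold hotel_out; simpl; rewrite ?tail_cns.
  - destruct (dec (t = t)); [reflexivity | contradiction].
  - destruct (dec (s = t)); [contradiction |].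
    destruct (dec (s = s /\ hits_t y)); [reflexivity | tauto].
  - assert (y0t : y 0 <> t) by (intro y0t; apply nhy; exists 0; split; [exact y0t | lia]).
    destruct (dec (y 0 = t)); [contradiction |].
    destruct (dec (y 0 = s /\ hits_t (tail y))); [| reflexivity].
    exfalso; apply nhy; rewrite <- cns_head_tail, hits_t_cns; tauto.
Qed.

Lemma seqs_TarskiIII : FSM_TarskiIII_infinite seqs fs_seq.
Proof.
  exists hotel_out; apply fs_bij_of_inverse with (g := hotel_in).
  - intros x fx; split; [exact I |]; unfold hotel_out.
    repeat destruct (dec _); try apply (fs_seq_reindex S); exact fx.
  - intros [b y] [_ fy]; simpl; destruct b; [| destruct (dec _)];
      try apply fs_seq_cns; exact fy.
  - intros x _; apply hotel_in_out.
  - intros [b y] _; apply hotel_out_in.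
  - exists [s; t]; intros p fixst x _; simpl.
    assert (ps : pfun p s = s) by (apply fixst; left; reflexivity).
    assert (pt : pfun p t = t) by (apply fixst; right; left; reflexivity).
    unfold hotel_out.
    rewrite (propositional_extensionality _ _ (pfun_eq_fixed p t (x 0) pt)),
      (propositional_extensionality _ _ (pfun_eq_fixed p s (x 0) ps)).
    change (tail (fun n => pfun p (x n))) with (fun n => pfun p (tail x n)).
    rewrite (propositional_extensionality _ _ (hits_t_perm p (tail x) ps pt)).
    repeat destruct (dec _); reflexivity.
Qed.

End Hotel.
End Sequences.

Section NatValued.
Variable A : Type.

Notation nfuns := (fun_set (atoms_set A) (nat_set A)).
Notation fs_nfun := (@fs_funs A (atoms_set A) (nat_set A)).

Lemma fs_nfun_combine (c : nat -> nat -> nat) (f g : A -> nat) :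
  fs_nfun f -> fs_nfun g -> fs_nfun (fun a => c (f a) (g a)).
Proof.
  intros [S HS] [T HT]; exists (S ++ T); intros p fixST a _; simpl in *.
  rewrite (HS p (fixes_incl _ _ _ (incl_appl T (incl_refl S)) fixST) a I),
    (HT p (fixes_incl _ _ _ (incl_appr S (incl_refl T)) fixST) a I).
  reflexivity.
Qed.

Definition split_nfun (f : A -> nat) : (A -> nat) * (A -> nat) :=
  (fun a => fst (Cantor.of_nat (f a)), fun a => snd (Cantor.of_nat (f a))).

Definition merge_nfun (gh : (A -> nat) * (A -> nat)) : A -> nat :=
  fun a => Cantor.to_nat (fst gh a, snd gh a).

Lemma nfuns_TarskiI : FSM_TarskiI_infinite nfuns fs_nfun.
Proof.
  exists split_nfun; apply fs_bij_of_inverse with (g := merge_nfun).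
  - intros f ff; split.
    + apply (fs_nfun_combine (fun m _ => fst (Cantor.of_nat m)) f f ff ff).
    + apply (fs_nfun_combine (fun m _ => snd (Cantor.of_nat m)) f f ff ff).
  - intros [g h] [fg fh].
    apply (fs_nfun_combine (fun m n => Cantor.to_nat (m, n)) g h fg fh).
  - intros f _; apply functional_extensionality; intro a.
    unfold merge_nfun, split_nfun; cbn [fst snd].
    rewrite <- surjective_pairing; apply Cantor.cancel_to_of.
  - intros [g h] _; unfold split_nfun, merge_nfun; cbn [fst snd].
    f_equal; apply functional_extensionality; intro a;
      rewrite Cantor.cancel_of_to; reflexivity.
  - exists []; intros p _ f _; reflexivity.
Qed.

Section AtAtom.
Variable s : A.

Definition update (f : A -> nat) (n : nat) : A -> nat :=
  fun a => if dec (a = s) then n else f a.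

Lemma update_same f n : update f n s = n.
Proof. unfold update; destruct (dec (s = s)); [reflexivity | contradiction]. Qed.

Lemma fs_nfun_update f n : fs_nfun f -> fs_nfun (update f n).
Proof.
  intros [S HS]; exists (s :: S); intros p fixS a _; simpl in *.
  assert (ps : pfun p s = s) by (apply fixS; left; reflexivity).
  unfold update; rewrite (propositional_extensionality _ _ (pfun_eq_fixed p s a ps)).
  destruct (dec (a = s)); [reflexivity |].
  apply (HS p (fixes_incl _ _ _ (incl_tl s (incl_refl S)) fixS) a I).
Qed.

Definition halve_at (f : A -> nat) : bool * (A -> nat) :=
  (Nat.odd (f s), update f (Nat.div2 (f s))).

Definition double_at (bg : bool * (A -> nat)) : A -> nat :=
  update (snd bg) (nat_join (fst bg) (snd bg s)).

Lemma nfuns_TarskiIII : FSM_TarskiIII_infinite nfuns fs_nfun.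
Proof.
  exists halve_at; apply fs_bij_of_inverse with (g := double_at).
  - intros f ff; split; [exact I | apply fs_nfun_update, ff].
  - intros [b g] [_ fg]; apply fs_nfun_update, fg.
  - intros f _; apply functional_extensionality; intro a.
    unfold double_at, halve_at; simpl.
    rewrite update_same, nat_join_odd_div2; unfold update.
    destruct (dec _) as [-> | _]; reflexivity.
  - intros [b g] _; unfold halve_at, double_at; simpl.
    rewrite update_same, nat_join_odd, nat_join_div2; f_equal.
    apply functional_extensionality; intro a; unfold update.
    destruct (dec _) as [-> | _]; reflexivity.
  - exists [s]; intros p fixs f _; simpl.
    assert (ps : pfun p s = s) by (apply fixs; left; reflexivity).
    unfold halve_at, update; rewrite (pinv_fixed p s ps); f_equal.
    apply functional_extensionality; intro a.
    rewrite (propositional_extensionality _ _ (pinv_eq_fixed p s a ps)).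
    reflexivity.
Qed.

End AtAtom.
End NatValued.

Theorem mainTheorem19 (A : Type) (HAinf : ~ exists l : list A, forall a : A, In a l) :
  (@FSM_TarskiI_infinite A (fun_set (nat_set A) (atoms_set A)) (@fs_funs A (nat_set A) (atoms_set A)) /\
   @FSM_TarskiIII_infinite A (fun_set (nat_set A) (atoms_set A)) (@fs_funs A (nat_set A) (atoms_set A))) /\
  (@FSM_TarskiI_infinite A (fun_set (atoms_set A) (nat_set A)) (@fs_funs A (atoms_set A) (nat_set A)) /\
   @FSM_TarskiIII_infinite A (fun_set (atoms_set A) (nat_set A)) (@fs_funs A (atoms_set A) (nat_set A))).
Proof.
  destruct (two_distinct_of_not_finite A HAinf) as [s [t s_neq_t]].
  split; split.
  - apply seqs_TarskiI.
  - apply (seqs_TarskiIII A s t s_neq_t).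
  - apply nfuns_TarskiI.
  - apply (nfuns_TarskiIII A s).
Qed.
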